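(* Let $n\ge3$ and $2\le m\le n-1$. Then $$\mathcal{H}^{[n]}_{K;m}(t)=\sum_{k\ge1}c^{[n]}_{k;m}t^k=\frac{t^{m-1}\mathcal{A}_{m-2}(1/t)}{t^n\mathcal{K}_n(1/t)}.$$
   Context: $K^{\infty}_n=\langle y_1,\dots,y_n\mid y_iy_j=y_jy_i\ (j+2\le i\le n-1),\ y_ny_k=y_ky_n\ (1\le k\le n-3)\rangle$. $c^{[n]}_{k;m}$ is the number of elements of $K^\infty_n$ of length $k$ whose smallest representative word in length-lexicographic order ($y_1<\cdots<y_n$) begins with $y_m$. $\mathcal{K}_n(\lambda)=\det(\lambda I_n-M_n)$ where $(M_n)_{j,i}=1$ if $i\ge j-1$ or $(j,i)=(n,n-2)$, $0$ otherwise. $\mathcal{A}_r(\lambda)=\det(\lambda I_r-N_r)$ for $r\ge1$ with $(N_r)_{j,i}=1$ if $i\ge j-1$, $0$ otherwise, and $\mathcal{A}_0=1$. *)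

From HB Require Import structures.
From mathcomp Require Import all_boot all_order all_algebra.
Set Implicit Arguments. Unset Strict Implicit. Unset Printing Implicit Defensive.
Import GRing.Theory Num.Theory.

(* Letters are 1-based naturals: y_a is the letter a, 1 <= a <= n. *)

(* y_a and y_b commute as a defining relation of K^oo_n (a <> b). *)
Definition kcomm (n a b : nat) : bool :=
  [|| [&& a <= n.-1, b <= n.-1 & (a + 2 <= b) || (b + 2 <= a)],
      (a == n) && (1 <= b <= n - 3) |
      (b == n) && (1 <= a <= n - 3)].

Definition swap_at (u : seq nat) (i : nat) : seq nat :=
  take i u ++ [:: nth 0 u i.+1; nth 0 u i] ++ drop i.+2 u.

Definition kstep (n : nat) (u v : seq nat) : bool :=
  has (fun i => [&& i.+1 < size u, kcomm n (nth 0 u i) (nth 0 u i.+1)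
                  & v == swap_at u i]) (iota 0 (size u)).

Fixpoint lexle (u v : seq nat) : bool :=
  match u, v with
  | [::], _ => true
  | _ :: _, [::] => false
  | a :: u', b :: v' => (a < b) || ((a == b) && lexle u' v')
  end.

Definition kword (n k : nat) (w : k.-tuple 'I_n) : seq nat :=
  [seq (val i).+1 | i <- w].

Definition kequiv (n k : nat) : rel (k.-tuple 'I_n) :=
  connect (fun u v => kstep n (kword u) (kword v)).

(* c^[n]_{k;m}: number of elements of length k whose length-lex smallest
   representative begins with y_m (= number of words of length k that are
   lex-minimal in their class and start with the letter m). *)
Definition cnum (n k m : nat) : nat :=
  #|[set w : k.-tuple 'I_n |
      (head 0 (kword w) == m) &&
      [forall w' : k.-tuple 'I_n, kequiv w w' ==> lexle (kword w) (kword w')]]|.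

(* the matrices M_n and N_r (row index j, column index i, 0-based) *)
Definition Mmat (n : nat) : 'M[int]_n :=
  \matrix_(j < n, i < n)
     ((j <= i.+1)%N || ((j == n.-1 :> nat) && (i == (n - 3)%N :> nat)))%:R%R.

Definition Nmat (r : nat) : 'M[int]_r :=
  \matrix_(j < r, i < r) (j <= i.+1)%N%:R%R.

(* K_n(lambda) and A_r(lambda) (char_poly of a 0x0 matrix is 1) *)
Definition Kpoly (n : nat) : {poly int} := char_poly (Mmat n).
Definition Apoly (r : nat) : {poly int} := char_poly (Nmat r).

(* recip d p = t^d p(1/t), for size p <= d+1 *)
Definition recip (d : nat) (p : {poly int}) : {poly int} :=
  \poly_(i < d.+1) nth 0%R p (d - i).

From mathcomp Require Import all_boot all_order all_algebra zify ring.
Import GRing.Theory Num.Theory.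

(* A word is the length-lexicographically smallest representative of its class
   exactly when no letter y_a is immediately followed by a smaller letter y_b
   commuting with it: such a factor could be swapped to decrease the word, and
   conversely a word without such factors precedes every equivalent word,
   because commutations preserve the subword formed by any two non-commuting
   letters.  So c_{k;m} counts walks of k letters starting at m in the graph
   "y_b may follow y_a", whose adjacency matrix is M_n.
   With lambda = 1/t, an explicit polynomial vector x with
   (lambda - M_n) x = K 1 is built from the A_r, which satisfy
   A_{r+2} = lambda (A_{r+1} - A_r).  In each column of lambda - M_n the
   entries above the diagonal coincide, so a Cramer argument identifies K with
   K_n (and likewise A_r with the characteristic polynomial of N_r); comparing
   the coefficients of the reversed polynomials then yields the generating
   function. *)

Set Implicit Arguments.
Unset Strict Implicit.
Unset Printing Implicit Defensive.

Definition swap_nth (T : Type) (x0 : T) (u : seq T) i :=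
  take i u ++ [:: nth x0 u i.+1; nth x0 u i] ++ drop i.+2 u.

Lemma take_nth2_drop (T : Type) (x0 : T) (u : seq T) i : i.+1 < size u ->
  u = take i u ++ [:: nth x0 u i; nth x0 u i.+1] ++ drop i.+2 u.
Proof.
move=> hi; rewrite -{1}(cat_take_drop i u) (drop_nth x0) ?(drop_nth x0 (n := i.+1)) //.
exact: ltnW.
Qed.

Lemma size_swap_nth (T : Type) (x0 : T) (u : seq T) i :
  i.+1 < size u -> size (swap_nth x0 u i) = size u.
Proof. by move=> hi; rewrite /swap_nth !size_cat size_take size_drop /=; case: ifP; lia. Qed.

Lemma map_swap_nth (T U : Type) (f : T -> U) (x0 : T) (y0 : U) (u : seq T) i :
  i.+1 < size u -> map f (swap_nth x0 u i) = swap_nth y0 (map f u) i.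
Proof.
move=> hi; rewrite /swap_nth !map_cat map_take map_drop /= !(nth_map x0) //.
exact: ltnW.
Qed.

Lemma lexle_cat p s s' : lexle (p ++ s) (p ++ s') = lexle s s'.
Proof. by elim: p => //= a p ->; rewrite ltnn eqxx. Qed.

Section NormalForms.
Variable n : nat.

Lemma kcommC a b : kcomm n a b = kcomm n b a.
Proof. by rewrite /kcomm; case: (a == n); case: (b == n); rewrite ?andbF ?andbT; lia. Qed.

Lemma kcommxx a : kcomm n a a = false.
Proof. by rewrite /kcomm; apply/negbTE; lia. Qed.

Definition kadm a b := ~~ ((b < a) && kcomm n a b).

Definition same_projections (s s' : seq nat) :=
  forall p q, ~~ kcomm n p q -> filter (pred2 p q) s = filter (pred2 p q) s'.

Lemma kadm_descent x y b :
  0 < y -> b < x -> kcomm n x b -> kcomm n y b -> kadm x y -> b < y.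
Proof. by rewrite /kadm /kcomm; lia. Qed.

Lemma path_kadm_notin x b s : path kadm x s -> all (fun a => 0 < a) s ->
  b < x -> kcomm n x b -> {in take (index b s) s, forall y, kcomm n y b} ->
  b \notin s.
Proof.
elim: s x => //= y s IH x /andP[kxy ps] /andP[y0 pos] bx kxb.
have [eyb|nyb] := eqVneq y b; first by rewrite /kadm eyb bx kxb in kxy.
rewrite inE eq_sym (negbTE nyb) /= => comm.
have kyb : kcomm n y b by apply: comm; rewrite inE eqxx.
apply: (IH y) => //; first exact: kadm_descent kxy.
by move=> z zs; apply: comm; rewrite inE zs orbT.
Qed.

Lemma commute_before_first b s s' : same_projections s (b :: s') ->
  {in take (index b s) s, forall y, kcomm n y b}.
Proof.
move=> pe y yt; apply/contraT => nyb; have := pe y b nyb.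
have bt : b \notin take (index b s) s by apply/negP => /index_ltn; rewrite ltnn.
have : has (pred2 y b) (take (index b s) s) by apply/hasP; exists y; rewrite //= eqxx.
rewrite -{3}(cat_take_drop (index b s) s) filter_cat /= eqxx orbT has_filter.
case E: filter => [|z t] //= _ [zb].
have : z \in filter (pred2 y b) (take (index b s) s) by rewrite E mem_head.
by rewrite mem_filter zb (negbTE bt) andbF.
Qed.

Lemma knormal_lexle s s' : sorted kadm s -> all (fun a => 0 < a) s ->
  size s = size s' -> same_projections s s' -> lexle s s'.
Proof.
elim: s s' => [|a s IH] [|b s'] //= ps /andP[a0 pos] [sz] pe.
have [eab|nab] := eqVneq a b.
  rewrite -eab ltnn /=; apply: IH => //; first exact: path_sorted ps.
  by move=> p q npq; move: (pe p q npq); rewrite -eab /=; case: ifP => // _ [].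
case: (ltngtP a b) => [//|ba|eab]; last by rewrite eab eqxx in nab.
have bs : b \in s.
  have := pe b b (negbT (kcommxx b)); rewrite /= eqxx /= (negbTE nab).
  by move/(congr1 (fun t => b \in t)); rewrite !mem_filter !inE eqxx.
have comm := commute_before_first pe.
have kab : kcomm n a b by apply: comm; rewrite /= (negbTE nab) mem_head.
suff : b \notin s by rewrite bs.
apply: (path_kadm_notin ps) => // y ys.
by apply: comm; rewrite /= (negbTE nab) inE ys orbT.
Qed.

Lemma kstep_same_projections u v : kstep n u v -> same_projections u v.
Proof.
move=> /hasP[i _ /and3P[hi kc /eqP ->]] p q npq.
rewrite {1}(take_nth2_drop 0 hi) /swap_at !filter_cat; congr (_ ++ (_ ++ _)).
move: (nth 0 u i) (nth 0 u i.+1) kc => a b kc.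
have : ~~ (pred2 p q a && pred2 p q b).
  apply/andP => -[/pred2P[] ea /pred2P[] eb]; subst a b;
    by rewrite ?kcommxx ?(kcommC q) ?(negbTE npq) in kc.
by rewrite /=; case: ifP => pa; case: ifP => pb; rewrite ?pa ?pb.
Qed.

Lemma kequiv_same_projections k (w w' : k.-tuple 'I_n) :
  kequiv w w' -> same_projections (kword w) (kword w').
Proof.
move=> /connectP[ws pw ->] p q npq.
elim: ws w pw => //= v ws IH w /andP[wv pv].
by rewrite (kstep_same_projections wv npq) (IH v pv).
Qed.

Lemma kword_pos k (w : k.-tuple 'I_n) : all (fun a => 0 < a) (kword w).
Proof. by apply/allP => a /mapP[x _ ->]. Qed.

Lemma lexmin_knormal k (w : k.-tuple 'I_n) :
  (forall w', kequiv w w' -> lexle (kword w) (kword w')) -> sorted kadm (kword w).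
Proof.
move=> lexmin; apply/(sortedP 0) => i hi; apply/negP => /andP[ba kc].
have hk : i.+1 < k by rewrite /kword size_map size_tuple in hi.
pose x0 := tnth w (Ordinal (ltnW hk)).
have sz : size (swap_nth x0 w i) == k by rewrite size_swap_nth size_tuple.
have kw : kword (Tuple sz) = swap_at (kword w) i.
  by rewrite /kword /= (map_swap_nth _ x0 0) // size_tuple.
have /lexmin : kequiv w (Tuple sz).
  apply: connect1; rewrite kw; apply/hasP; exists i; first by rewrite mem_iota; lia.
  by rewrite hi kc eqxx.
rewrite kw /swap_at {1}(take_nth2_drop 0 hi) lexle_cat /=.
by rewrite ltnNge (ltnW ba) /= eq_sym (ltn_eqF ba).
Qed.

Lemma lexminE k (w : k.-tuple 'I_n) :
  [forall w', kequiv w w' ==> lexle (kword w) (kword w')] = sorted kadm (kword w).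
Proof.
apply/forallP/idP => [lexmin|nf w'].
  by apply: lexmin_knormal => w'; apply/implyP.
apply/implyP => /kequiv_same_projections; apply: knormal_lexle nf (kword_pos w) _.
by rewrite /kword !size_map !size_tuple.
Qed.

End NormalForms.

Lemma cnumE n k m : cnum n k m =
  \sum_(w : k.-tuple 'I_n) ((head 0 (kword w) == m) && sorted (kadm n) (kword w)).
Proof. by rewrite /cnum -sum1dep_card big_mkcond; apply: eq_bigr => w _; rewrite lexminE. Qed.

Lemma big_tuple_cons (T : finType) l (F : l.+1.-tuple T -> nat) :
  \sum_(w : l.+1.-tuple T) F w = \sum_(a : T) \sum_(t : l.-tuple T) F [tuple of a :: t].
Proof.
rewrite pair_big (reindex (fun p : T * l.-tuple T => [tuple of p.1 :: p.2])) //=.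
exists (fun w => (thead w, behead_tuple w)) => [[a t] _|w _] /=.
  by congr pair; apply: val_inj.
by rewrite -tuple_eta.
Qed.

Lemma kword_cons n l (a : 'I_n) (t : l.-tuple 'I_n) :
  kword [tuple of a :: t] = a.+1 :: kword t.
Proof. by []. Qed.

Lemma sum_eq_andb (I : finType) (j : I) (P : pred I) :
  \sum_(a : I) ((a == j) && P a) = P j.
Proof. by rewrite (bigD1 j) //= eqxx big1 ?addn0 // => a /negbTE ->. Qed.

Lemma cnumS n l (j : 'I_n) :
  cnum n l.+1 j.+1 = \sum_(t : l.-tuple 'I_n) path (kadm n) j.+1 (kword t).
Proof.
rewrite cnumE big_tuple_cons exchange_big; apply: eq_bigr => t _.
by under eq_bigr do rewrite kword_cons /= eqSS; rewrite sum_eq_andb.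
Qed.

Lemma cnum1 n (j : 'I_n) : cnum n 1 j.+1 = 1.
Proof.
rewrite cnumS (eq_bigr (fun=> 1)) => [|t _]; last by rewrite tuple0.
by rewrite sum1_card card_tuple.
Qed.

Lemma cnum_rec n l (j : 'I_n) :
  cnum n l.+2 j.+1 = \sum_(i < n) kadm n j.+1 i.+1 * cnum n l.+1 i.+1.
Proof.
rewrite cnumS big_tuple_cons; apply: eq_bigr => i _.
by rewrite cnumS big_distrr; apply: eq_bigr => t _; rewrite kword_cons /= mulnb.
Qed.

Local Open Scope ring_scope.

Lemma sum_ord_delta (V : nmodType) s k (F : nat -> V) :
  (k < s)%N -> \sum_(i < s) F i *+ (k == i) = F k.
Proof. by move=> ks; under eq_bigr do rewrite eq_sym mulrb; rewrite -big_mkcond big_ord1_eq ks. Qed.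

(* Subtracting from each row the previous one (the matrix [D]) clears row [j > 0]
   above the diagonal and turns the system into [(D B) x = c e_0]; Cramer's rule
   for [x_0] leaves the (0,0) cofactor, a triangular determinant. *)
Section HeadCramer.
Variables (R : comNzRingType) (s : nat) (b : nat -> nat -> R) (x : nat -> R) (c : R).
Hypothesis rowsum : forall j, (j <= s)%N -> \sum_(i < s.+1) b j i * x i = c.
Hypothesis colconst : forall j i, (0 < j < i)%N -> (i <= s)%N -> b j i = b j.-1 i.

Let B := \matrix_(j < s.+1, i < s.+1) b j i.
Let D : 'M[R]_s.+1 := \matrix_(j, l) ((j == l :> nat)%:R - (j == l.+1 :> nat)%:R).
Let xv : 'cV[R]_s.+1 := \col_i x i.

Lemma det_rowdiff : \det D = 1.
Proof.
rewrite det_trig; last first.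
  apply/forallP => j; apply/forallP => l; apply/implyP => jl.
  by rewrite mxE (ltn_eqF jl) ltn_eqF ?subrr //; lia.
by apply: big1 => j _; rewrite mxE eqxx (ltn_eqF (ltnSn _)) subr0.
Qed.

Lemma rowdiffE (j i : 'I_s.+1) :
  (D *m B) j i = b j i - (if (0 < j)%N then b j.-1 i else 0).
Proof.
rewrite mxE; under eq_bigr do rewrite !mxE mulrBl !mulr_natl.
rewrite sumrB (sum_ord_delta (fun l => b l i)) //.
case: j => -[|j] hj /=; first by rewrite big1 ?subr0.
rewrite (eq_bigr (fun l : 'I_s.+1 => b l i *+ (j == l))) => [|l _]; last by rewrite eqSS.
by rewrite (sum_ord_delta (fun l => b l i)) //; lia.
Qed.

Lemma rowdiff_sol (j : 'I_s.+1) : (D *m B *m xv) j ord0 = c *+ (j == ord0).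
Proof.
rewrite mxE; under eq_bigr do rewrite rowdiffE mxE mulrBl.
rewrite sumrB rowsum; last by rewrite -ltnS.
case: j => -[|j] hj /=; first by rewrite big1 ?subr0 // => i _; rewrite mul0r.
by rewrite rowsum ?subrr //; lia.
Qed.

Lemma det_mul_sol_head : \det B * x 0 = c * \prod_(j < s) (b j.+1 j.+1 - b j j.+1).
Proof.
have := congr1 (fun M => (M *m xv) ord0 ord0) (mul_adj_mx (D *m B)).
rewrite /= -mulmxA mul_scalar_mx !mxE.
rewrite (bigD1 ord0) //= big1 ?addr0 => [|l nl]; last first.
  by rewrite rowdiff_sol (negbTE nl) mulr0.
rewrite rowdiff_sol mulr1n det_mulmx det_rowdiff mul1r mulrC => <-.
congr (_ * _); rewrite mxE /cofactor /= expr0 mul1r.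
rewrite det_trig; last first.
  apply/forallP => j; apply/forallP => i; apply/implyP => ji.
  by rewrite mxE mxE rowdiffE /= colconst ?subrr //; lia.
by apply: eq_bigr => j _; rewrite mxE mxE rowdiffE.
Qed.

End HeadCramer.

Lemma char_poly_from_sol (R : comNzRingType) s (a : nat -> nat -> R)
    (x : nat -> {poly R}) (c : {poly R}) :
  (forall j i, (0 < j < i)%N -> (i <= s)%N -> a j i = a j.-1 i) ->
  (forall j, (j < s)%N -> a j.+1 j.+1 = a j j.+1) ->
  (forall j, (j <= s)%N -> 'X * x j - \sum_(i < s.+1) (a j i)%:P * x i = c) ->
  x 0%N = 'X^s ->
  char_poly (\matrix_(j < s.+1, i < s.+1) a j i) = c.
Proof.
move=> acol adiag arow x0.
pose b j i : {poly R} := 'X *+ (j == i) - (a j i)%:P.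
rewrite /char_poly.
have -> : char_poly_mx (\matrix_(j < s.+1, i < s.+1) a j i) =
          \matrix_(j < s.+1, i < s.+1) b j i by apply/matrixP => j i; rewrite !mxE.
have brow j : (j <= s)%N -> \sum_(i < s.+1) b j i * x i = c.
  move=> js; rewrite -(arow j js); under eq_bigr do rewrite mulrBl mulrnAl.
  by rewrite sumrB (sum_ord_delta (fun i => 'X * x i)).
have bcol j i : (0 < j < i)%N -> (i <= s)%N -> b j i = b j.-1 i.
  by move=> ji si; rewrite /b acol // !ltn_eqF //; lia.
have := det_mul_sol_head brow bcol.
rewrite x0 (eq_bigr (fun=> 'X)) => [|j _]; last first.
  by rewrite /b adiag // eqxx (ltn_eqF (ltnSn j)) mulr1n mulr0n; ring.
rewrite prodr_const card_ord => detX.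
by apply: (rreg_lead _ detX); rewrite lead_coefXn; exact: rreg1.
Qed.

Fixpoint Arec (r : nat) : {poly int} :=
  if r is r1.+1 then (if r1 is r2.+1 then 'X * (Arec r1 - Arec r2) else 'X - 1)
  else 1.

Lemma ArecSS r : Arec r.+2 = 'X * (Arec r.+1 - Arec r).
Proof. by []. Qed.

Definition Nsol (s j : nat) : {poly int} :=
  if j is j'.+1 then 'X^(s - j)%N * Arec j' else 'X^(s.-1).

Lemma Nsol_telescope s j : (j < s)%N ->
  Nsol s j = 'X^(s - j)%N * Arec j - 'X^(s - j.+1)%N * Arec j.+1.
Proof.
case: j => [|j] js.
  by rewrite /= subn0 subn1 -{2}(prednK js) exprSr; ring.
by rewrite ArecSS /= (_ : s - j.+1 = (s - j.+2).+1)%N; [rewrite exprSr; ring | lia].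
Qed.

Lemma mulX_Nsol s j : (j < s)%N -> 'X * Nsol s j = 'X^(s - j.-1)%N * Arec j.-1.
Proof.
case: j => [|j] js /=; first by rewrite subn0 mulr1 -exprS (prednK js).
by rewrite mulrA -exprS (subnSK (ltnW js)).
Qed.

Lemma Nsol_row s j : (j < s)%N ->
  'X * Nsol s j - \sum_(i < s) ((j <= i.+1)%N%:R)%:P * Nsol s i = Arec s.
Proof.
move=> js; under eq_bigr do rewrite rmorph_nat mulr_natl.
have -> : \sum_(i < s) Nsol s i *+ (j <= i.+1) = \sum_(j.-1 <= i < s) Nsol s i.
  rewrite big_geq_mkord [RHS]big_mkcond; apply: eq_bigr => i _.
  by rewrite mulrb (_ : (j <= i.+1) = (j.-1 <= i))%N //; apply/idP/idP; lia.
rewrite (@telescope_sumr_eq _ _ _ (fun i => - ('X^(s - i)%N * Arec i))).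
- by rewrite mulX_Nsol // subnn expr0 mul1r; ring.
- lia.
- by move=> i /andP[_ ?]; rewrite Nsol_telescope // opprK addrC.
Qed.

Lemma ApolyE r : Apoly r = Arec r.
Proof.
case: r => [|s]; first by rewrite /Apoly /char_poly det_mx00.
apply: (@char_poly_from_sol int s (fun j i => (j <= i.+1)%N%:R) (Nsol s.+1))
  => [j i ji si|j js|j js|] //.
- by have [-> ->] : (j <= i.+1)%N /\ (j.-1 <= i.+1)%N by lia.
- by rewrite leqnSn (leqW (leqnSn j)).
- exact: Nsol_row.
Qed.

(* The extra entry of M_n makes its last row equal to the previous one
   ([Mrel_last]), so the solution for N_n is corrected by repeating its
   next-to-last entry; then K_n = A_n + X A_(n-2) - X^2 A_(n-3). *)
Definition Mrel (n j i : nat) : bool := ((j <= i.+1) || (j == n.-1) && (i == n - 3))%N.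
Definition Msol (n j : nat) : {poly int} := Nsol n (if j == n.-1 then n.-2 else j).
Definition Kexpl (n : nat) : {poly int} := Arec n + Nsol n n.-1 - Nsol n n.-2.

Lemma MsolE n i :
  Msol n i = Nsol n i + (Nsol n n.-2 - Nsol n n.-1) *+ (n.-1 == i).
Proof. by rewrite /Msol eq_sym; case: eqP => [->|_]; rewrite ?mulr1n ?mulr0n; ring. Qed.

Lemma Msol_row_low n j : (3 <= n)%N -> (j < n.-1)%N ->
  'X * Msol n j - \sum_(i < n) ((Mrel n j i)%:R)%:P * Msol n i = Kexpl n.
Proof.
move=> hn jn; have Mrel_low i : Mrel n j i = (j <= i.+1)%N.
  by rewrite /Mrel (ltn_eqF jn) andFb orbF.
under eq_bigr do rewrite Mrel_low MsolE mulrDr mulrnAr.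
rewrite big_split /= (sum_ord_delta (fun i => ((j <= i.+1)%N%:R)%:P * _)); last lia.
rewrite {1}/Msol (ltn_eqF jn) opprD addrA Nsol_row; last lia.
by rewrite (_ : j <= n.-1.+1)%N ?polyC1 ?mul1r /Kexpl; [ring | lia].
Qed.

Lemma Mrel_last n i : (3 <= n)%N -> Mrel n n.-1 i = Mrel n n.-2 i.
Proof. by rewrite /Mrel !eqxx => hn; apply/idP/idP; lia. Qed.

Lemma Msol_row n j : (3 <= n)%N -> (j < n)%N ->
  'X * Msol n j - \sum_(i < n) ((Mrel n j i)%:R)%:P * Msol n i = Kexpl n.
Proof.
move=> hn jn; case: (ltnP j n.-1) => [|jn1]; first exact: Msol_row_low.
have -> : j = n.-1 by lia.
have -> : Msol n n.-1 = Msol n n.-2 by rewrite /Msol eqxx ltn_eqF //; lia.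
rewrite -(@Msol_row_low n n.-2) //; last lia.
by under eq_bigr do rewrite (Mrel_last _ hn).
Qed.

Lemma KpolyE n : (3 <= n)%N -> Kpoly n = Kexpl n.
Proof.
case: n => [|s] // hn.
apply: (@char_poly_from_sol int s (fun j i => (Mrel s.+1 j i)%:R) (Msol s.+1))
  => [j i ji si|j js|j js|].
- by rewrite /Mrel; have [-> ->] : (j <= i.+1)%N /\ (j.-1 <= i.+1)%N by lia.
- by rewrite /Mrel leqnSn (leqW (leqnSn j)).
- exact: Msol_row.
- by case: s hn.
Qed.

Lemma kadmE n (j i : 'I_n) : (3 <= n)%N -> kadm n j.+1 i.+1 = Mrel n j i.
Proof.
move=> hn; have := ltn_ord j; have := ltn_ord i.
by rewrite /kadm /kcomm /Mrel => ? ?; apply/idP/idP; lia.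
Qed.

Lemma coef_Arec r p : (r < p)%N -> (Arec r)`_p = 0.
Proof.
elim/ltn_ind: r p => r IH p rp.
case: r IH rp => [|[|r]] IH rp.
- by rewrite coef1 gtn_eqF.
- by rewrite coefB coefX coef1 (gtn_eqF rp) (gtn_eqF (ltnW rp)) subrr.
- by rewrite ArecSS coefXM gtn_eqF ?coefB ?IH ?subr0 //; lia.
Qed.

Lemma coef_Nsol s j p : (j < s)%N -> (s <= p)%N -> (Nsol s j)`_p = 0.
Proof.
case: j => [|j] js sp /=; first by rewrite coefXn gtn_eqF //; lia.
by rewrite coefXnM; case: ifP => // _; apply: coef_Arec; lia.
Qed.

Lemma coef_Msol n j p : (j < n)%N -> (n <= p)%N -> (Msol n j)`_p = 0.
Proof. by move=> jn np; apply: coef_Nsol => //; case: ifP; lia. Qed.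

Lemma coef_recip d p q : (recip d p)`_q = if (q <= d)%N then p`_(d - q) else 0.
Proof. by rewrite coef_poly ltnS. Qed.

(* As power series: if [F = (1 - t M)^-1 1] and [(1 - t M) u = r 1], then [u = F r]. *)
Section Transfer.
Variables (R : comPzRingType) (d : nat) (M : 'I_d -> 'I_d -> R).
Variables (f : nat -> 'I_d -> R) (u : 'I_d -> nat -> R) (r : nat -> R).
Hypothesis f0 : forall j, f 0%N j = 1.
Hypothesis fS : forall l j, f l.+1 j = \sum_i M j i * f l i.
Hypothesis u0 : forall j, u j 0%N = r 0%N.
Hypothesis uS : forall j k, u j k.+1 - \sum_i M j i * u i k = r k.+1.

Lemma transfer_convolution k j : \sum_(l < k.+1) f (k - l)%N j * r l = u j k.
Proof.
elim: k j => [|k IH] j; first by rewrite big_ord1 f0 mul1r u0.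
rewrite big_ord_recr /= subnn f0 mul1r -(uS j k) addrC.
suff -> : \sum_(l < k.+1) f (k.+1 - l)%N j * r l = \sum_i M j i * u i k.
  by rewrite subrK.
under eq_bigr => l _ do rewrite (subSn (ltn_ord l : (l <= k)%N)) fS mulr_suml.
rewrite exchange_big /=; apply: eq_bigr => i _.
by rewrite -IH mulr_sumr; apply: eq_bigr => l _; rewrite mulrA.
Qed.

End Transfer.

(* Reversing [X P_j = \sum_i c_ji P_i + Q] with [deg P_j < d] gives the power-series
   system [(1 - t c) u = r 1] for [u_j = t^(d-1) P_j(1/t)] and [r = t^d Q(1/t)]. *)
Section ReversedSystem.
Variables (d : nat) (c : 'I_d -> 'I_d -> int) (P : 'I_d -> {poly int}) (Q : {poly int}).
Hypothesis d_gt0 : (0 < d)%N.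
Hypothesis P_small : forall j p, (d <= p)%N -> (P j)`_p = 0.
Hypothesis P_row : forall j, 'X * P j - \sum_i (c j i)%:P * P i = Q.

Lemma coef_row j p : ('X * P j)`_p - \sum_i c j i * (P i)`_p = Q`_p.
Proof.
rewrite -(P_row j) coefB coef_sum; congr (_ - _).
by apply: eq_bigr => i _; rewrite coefCM.
Qed.

Lemma recip_row0 j : (recip d.-1 (P j))`_0 = (recip d Q)`_0.
Proof.
rewrite !coef_recip !subn0 -(coef_row j) coefXM gtn_eqF // big1 ?subr0 // => i _.
by rewrite P_small ?mulr0.
Qed.

Lemma recip_rowS j q :
  (recip d.-1 (P j))`_q.+1 - \sum_i c j i * (recip d.-1 (P i))`_q = (recip d Q)`_q.+1.
Proof.
rewrite !coef_recip -(coef_row j) coefXM.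
case: (ltngtP q.+1 d) => [qd|dq|qd].
- have [e1 e2] : (q < d.-1)%N /\ (q <= d.-1)%N by lia.
  under eq_bigr do rewrite coef_recip e2.
  rewrite e1 gtn_eqF ?subn_gt0 // (_ : d.-1 - q = d - q.+1)%N; last lia.
  by rewrite (_ : (d - q.+1).-1 = d.-1 - q.+1)%N; last lia.
- have [e1 e2] : (q < d.-1)%N = false /\ (q <= d.-1)%N = false by split; lia.
  by under eq_bigr do rewrite coef_recip e2 mulr0; rewrite e1 big1_eq subr0.
- have [e1 e2] : (q < d.-1)%N = false /\ (q <= d.-1)%N by split; lia.
  under eq_bigr do rewrite coef_recip e2.
  rewrite e1 (_ : d - q.+1 = 0)%N; last lia.
  by rewrite (_ : d.-1 - q = 0)%N; [rewrite eqxx | lia].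
Qed.

End ReversedSystem.

Lemma cnum_convolution n m k : (3 <= n)%N -> (0 < m <= n)%N ->
  \sum_(l < k.+1) (cnum n (k.+1 - l) m)%:Z * (recip n (Kexpl n))`_l
    = (recip n.-1 (Msol n m.-1))`_k.
Proof.
move=> hn /andP[m0 mn]; have n0 : (0 < n)%N by lia.
pose c (j i : 'I_n) : int := (kadm n j.+1 i.+1)%:R.
have row (j : 'I_n) : 'X * Msol n j - \sum_i (c j i)%:P * Msol n i = Kexpl n.
  rewrite -(Msol_row hn (ltn_ord j)); congr (_ - _).
  by apply: eq_bigr => i _; rewrite /c kadmE.
have small (j : 'I_n) p : (n <= p)%N -> (Msol n j)`_p = 0 by apply: coef_Msol.
have f0 (j : 'I_n) : (cnum n 1 j.+1)%:Z = 1 by rewrite cnum1.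
have fS l (j : 'I_n) :
    (cnum n l.+2 j.+1)%:Z = \sum_i c j i * (cnum n l.+1 i.+1)%:Z.
  rewrite cnum_rec (big_morph Posz PoszD (erefl _)).
  by apply: eq_bigr => i _; rewrite PoszM /c natz.
have m1n : (m.-1 < n)%N by lia.
have := transfer_convolution f0 fS (recip_row0 n0 small row) (recip_rowS n0 row)
  k (Ordinal m1n).
rewrite /= prednK // => <-; apply: eq_bigr => l _.
by rewrite (subSn (ltn_ord l : (l <= k)%N)).
Qed.

Lemma recip_Msol_shift n m k : (2 <= m <= n.-1)%N ->
  (recip n.-1 (Msol n m.-1))`_k = (recip m.-1 (Arec (m - 2)))`_k.+1.
Proof.
move=> hm; have -> : Msol n m.-1 = 'X^(n - m.-1)%N * Arec (m - 2).
  rewrite /Msol ltn_eqF; last lia.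
  by rewrite (_ : m.-1 = (m - 2).+1)%N; last lia.
rewrite !coef_recip coefXnM.
case: (leqP k.+1 m.-1) => km.
- have [-> ->] : (k <= n.-1)%N /\ (n.-1 - k < n - m.-1)%N = false by split; lia.
  by congr (_`_ _); lia.
- by case: ifP => // _; rewrite (_ : n.-1 - k < n - m.-1)%N //; lia.
Qed.

Theorem lemma5 (n m : nat) (hn : (3 <= n)%N) (hm : (2 <= m <= n.-1)%N) :
  forall k : nat,
    \sum_(j < k) (cnum n (k - j) m)%:Z * (recip n (Kpoly n))`_j
    = (recip m.-1 (Apoly (m - 2)))`_k.
Proof.
move=> [|k]; first by rewrite big_ord0 ApolyE coef_recip subn0 coef_Arec //; lia.
by rewrite KpolyE // ApolyE cnum_convolution ?recip_Msol_shift //; lia.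
Qed.
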